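(* Let $\mathcal{X},\mathcal{Y}$ be finite sets and $n\ge1$. Let $\tilde{\Phi}_n=(\tilde{\varphi}_0,\tilde{\varphi}_2,\tilde{\psi})$ be a WAK code of blocklength $n$ with message sets $\tilde{\mathcal{M}}_0,\tilde{\mathcal{M}}_2$, and let $P_{\bar X\bar Y}\in\mathcal{P}_n(\mathcal{X}\times\mathcal{Y})$ be a joint type with $\log|\mathcal{T}^n_{\bar X}|\ge\log|\tilde{\mathcal{M}}_0|$, where $\mathcal{T}^n_{\bar X}$ is the type class of the marginal type $P_{\bar X}$. Then there exists another WAK code $\hat{\Phi}_n=(\hat{\varphi}_0,\hat{\varphi}_2,\hat{\psi})$ with message sets $\hat{\mathcal{M}}_0,\hat{\mathcal{M}}_2$ such that \begin{align*} \log|\hat{\mathcal{M}}_0| &\le \log|\tilde{\mathcal{M}}_0|+\log n+\log\log|\mathcal{X}|+2,\\ \log|\hat{\mathcal{M}}_2| &= \log|\tilde{\mathcal{M}}_2|,\\ \mathrm{P}_{\mathtt{WAK}}(\hat{\Phi}_n\mid P_{\mathcal{T}^n_{\bar X\bar Y}}) &\le \mathrm{P}_{\mathtt{WAK}}(\tilde{\Phi}_n\mid P_{\mathcal{T}^n_{\bar X\bar Y}}), \end{align*} and for every $m\in\hat{\mathcal{M}}_0$, $$\log|\hat{\varphi}_0^{-1}(m)\cap\mathcal{T}^n_{\bar X}|\le\log\frac{|\mathcal{T}^n_{\bar X}|}{|\tilde{\mathcal{M}}_0|}.$$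
   Context: All logarithms are base 2. $\mathcal{P}_n(\mathcal{X}\times\mathcal{Y})$ is the set of joint types of sequences in $\mathcal{X}^n\times\mathcal{Y}^n$; for a joint type $P_{\bar X\bar Y}$, $\mathcal{T}^n_{\bar X\bar Y}$ is its type class and $P_{\mathcal{T}^n_{\bar X\bar Y}}$ is the uniform distribution on $\mathcal{T}^n_{\bar X\bar Y}$. A WAK code of blocklength $n$ is a triple $(\tilde{\varphi}_0,\tilde{\varphi}_2,\tilde{\psi})$ of maps $\tilde{\varphi}_0:\mathcal{X}^n\to\tilde{\mathcal{M}}_0$, $\tilde{\varphi}_2:\mathcal{Y}^n\to\tilde{\mathcal{M}}_2$, $\tilde{\psi}:\tilde{\mathcal{M}}_0\times\tilde{\mathcal{M}}_2\to\mathcal{Y}^n$, with finite sets $\tilde{\mathcal{M}}_0,\tilde{\mathcal{M}}_2$. For $(X^n,Y^n)\sim P$, $\mathrm{P}_{\mathtt{WAK}}(\tilde{\Phi}_n\mid P)$ is the probability that $\tilde{\psi}(\tilde{\varphi}_0(X^n),\tilde{\varphi}_2(Y^n))\ne Y^n$. *)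

From HB Require Import structures.
From mathcomp Require Import all_boot all_order all_algebra.
From mathcomp Require Import all_classical all_reals.
From mathcomp Require Import exp.
Set Implicit Arguments. Unset Strict Implicit. Unset Printing Implicit Defensive.
Import Order.TTheory GRing.Theory Num.Theory.
Local Open Scope ring_scope.

(* Base-2 logarithm (MathComp-Analysis convention: ln x = 0 for x <= 0). *)
Definition log2 {R : realType} (x : R) : R := ln x / ln 2.

Section Types.
Variables (X Y : finType) (n : nat).

Definition ptype (x : n.-tuple X) : {ffun X -> nat} :=
  [ffun a => count (pred1 a) x].

Definition jtype (x : n.-tuple X) (y : n.-tuple Y) : {ffun X * Y -> nat} :=
  [ffun ab => count (pred1 ab) (zip x y)].

(* P_n(X x Y): the set of joint types of sequences in X^n x Y^n,
   each represented by its count function n * P(a,b) *)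
Definition is_jointType (P : {ffun X * Y -> nat}) : Prop :=
  exists (x : n.-tuple X) (y : n.-tuple Y), jtype x y = P.

Definition typeClassXY (P : {ffun X * Y -> nat}) :
  {set n.-tuple X * n.-tuple Y} :=
  [set xy | jtype xy.1 xy.2 == P].

Definition margX (P : {ffun X * Y -> nat}) : {ffun X -> nat} :=
  [ffun a => \sum_(b : Y) P (a, b)]%N.

Definition typeClassX (P : {ffun X * Y -> nat}) : {set n.-tuple X} :=
  [set x | ptype x == margX P].

Definition unifT {R : realType} (P : {ffun X * Y -> nat})
  (xy : n.-tuple X * n.-tuple Y) : R :=
  if xy \in typeClassXY P then (#|typeClassXY P|%:R)^-1 else 0.

Definition Pwak {R : realType} (M0 M2 : finType)
  (phi0 : n.-tuple X -> M0) (phi2 : n.-tuple Y -> M2)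
  (psi : M0 -> M2 -> n.-tuple Y) (Q : n.-tuple X * n.-tuple Y -> R) : R :=
  \sum_(xy : n.-tuple X * n.-tuple Y | psi (phi0 xy.1) (phi2 xy.2) != xy.2) Q xy.

End Types.

(** Refine the encoder [phi0]: its messages split the marginal type class [T] into
    bins, and each bin is cut, along an enumeration, into chunks of [K = |T| %/ |M0|]
    elements.  The new message is the pair (old message, chunk index) and the decoder
    ignores the chunk index, so the error event is unchanged, while every new message
    has at most [K <= |T| / |M0|] preimages in [T].  Since [|T| < 2 K |M0|], there are
    at most [|T| %/ K + |M0| < 3 |M0|] new messages, so the rate grows by less than two
    bits. *)

From HB Require Import structures.
From mathcomp Require Import all_boot all_order all_algebra.
From mathcomp Require Import all_classical all_reals.
From mathcomp Require Import exp.
From mathcomp Require Import zify.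
Set Implicit Arguments.
Unset Strict Implicit.
Unset Printing Implicit Defensive.

Import Order.TTheory GRing.Theory Num.Theory.
Local Open Scope ring_scope.

Section Log2.
Variable R : realType.
Implicit Types x y : R.

Lemma ln2_gt0 : 0 < ln (2 : R).
Proof. by rewrite ln_gt0 // ltr1n. Qed.

Lemma log2_2 : log2 (2 : R) = 1.
Proof. by rewrite /log2 divff // gt_eqF // ln2_gt0. Qed.

Lemma log2M : {in Num.pos &, {morph (@log2 R) : x y / x * y >-> x + y}}.
Proof. by move=> x y x0 y0; rewrite /log2 lnM // mulrDl. Qed.

Lemma log2_exp2 k : log2 (2 ^+ k : R) = k%:R.
Proof. by rewrite /log2 lnXn // mulrnAl divff // gt_eqF // ln2_gt0. Qed.

Lemma ler_log2 : {in Num.pos &, {mono (@log2 R) : x y / x <= y}}.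
Proof. by move=> x y x0 y0; rewrite /log2 ler_pM2r ?invr_gt0 ?ln2_gt0 // ler_ln. Qed.

Lemma log2_ge0 x : 1 <= x -> 0 <= log2 x.
Proof. by move=> x1; rewrite /log2 divr_ge0 ?ln_ge0 // ler1n. Qed.

(* [log2] vanishes on nonpositive arguments, so monotonicity extends below [0]. *)
Lemma log2_le x y : x <= y -> 1 <= y -> log2 x <= log2 y.
Proof.
move=> xy y1; have [x0|x0] := leP x 0; first by rewrite /log2 ln0 // mul0r log2_ge0.
by rewrite ler_log2 // posrE (lt_le_trans ltr01).
Qed.

Lemma log2_le_exp2M (k a m : nat) : (0 < m)%N -> (a <= 2 ^ k * m)%N ->
  log2 (a%:R : R) <= log2 (m%:R : R) + k%:R.
Proof.
move=> m_gt0 a_le; rewrite -(log2_exp2 k) addrC -log2M ?posrE ?exprn_gt0 ?ltr0n //.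
by rewrite -natrX -natrM log2_le ?ler_nat ?ler1n ?muln_gt0 ?expn_gt0.
Qed.

Lemma log2_le_divn (a t m : nat) : (0 < m)%N -> (m <= t)%N -> (a <= t %/ m)%N ->
  log2 (a%:R : R) <= log2 (t%:R / m%:R : R).
Proof.
move=> m_gt0 m_le a_le; apply: log2_le; rewrite ler_pdivlMr ?ltr0n //.
  by rewrite -natrM ler_nat (leq_trans (leq_mul a_le (leqnn m))) ?leq_divM.
by rewrite mul1r ler_nat.
Qed.

End Log2.

Lemma divn_divn_lt (t m : nat) : (0 < m)%N -> (m <= t)%N -> (t %/ (t %/ m) < 2 * m)%N.
Proof.
move=> m_gt0 m_le; have q_gt0 : (0 < t %/ m)%N by rewrite divn_gt0.
have := ltn_ceil t m_gt0; rewrite ltn_divLR //; nia.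
Qed.

Section Chunks.
Variables (A M : finType) (T : {set A}) (f : A -> M) (K : nat).

Definition bin (m : M) : {set A} := [set x in T | f x == m].

Lemma bin_sub m : bin m \subset T.
Proof. by apply/fintype.subsetP => x; rewrite inE => /andP[]. Qed.

Definition chunk (x : A) : nat := (index x (enum (bin (f x))) %/ K)%N.

Definition nchunks (m : M) : nat := (#|bin m| %/ K).+1.

Lemma chunk_lt x : (chunk x < nchunks (f x))%N.
Proof. by rewrite ltnS leq_div2r // cardE index_size. Qed.

Definition chunked_msg : finType := {m : M & 'I_(nchunks m)}.

Definition chunked (x : A) : chunked_msg :=
  Tagged (fun m => 'I_(nchunks m)) (Ordinal (chunk_lt x)).

Lemma sum_card_bin : (\sum_m #|bin m|)%N = #|T|.
Proof.
rewrite -sum1_card (partition_big f xpredT) //=.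
by apply: eq_bigr => m _; rewrite -sum1_card; apply: eq_bigl => x; rewrite inE.
Qed.

Lemma card_chunked_msg : (#|{: chunked_msg}| <= #|T| %/ K + #|M|)%N.
Proof.
rewrite card_tagged sumnE big_map big_enum /=.
rewrite (eq_bigr (fun m => #|bin m| %/ K + 1)%N) ?big_split /=; last first.
  by move=> m _; rewrite card_ord addn1.
rewrite sum_nat_const muln1 leq_add2r.
have [->|K0] := posnP K; first by rewrite big1 // => m _; rewrite divn0.
rewrite leq_divRL // -sum_card_bin big_distrl /=.
by apply: leq_sum => m _; apply: leq_divM.
Qed.

Lemma index_bin_inj m : {in bin m &, injective (fun x => index x (enum (bin m)))}.
Proof.
move=> x y xb yb /= ixy.
by rewrite -(nth_index x (_ : x \in enum (bin m))) ?ixy ?nth_index ?mem_enum.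
Qed.

Lemma card_chunk_le (p : chunked_msg) :
  (0 < K)%N -> (#|[set x in T | chunked x == p]| <= K)%N.
Proof.
move=> K0; set S := [set x in T | _].
pose rem_index x : 'I_K := Ordinal (ltn_pmod (index x (enum (bin (f x)))) K0).
suff inj : {in S &, injective rem_index}.
  by rewrite -(card_in_imset inj) (leq_trans (max_card _)) ?card_ord.
move=> x y; rewrite !inE => /andP[xT /eqP <-] /andP[yT /eqP cyx] /(congr1 val) /=.
have fyx : f y = f x := congr1 tag cyx.
have := congr1 (fun q : chunked_msg => nat_of_ord (tagged q)) cyx.
rewrite /= /chunk fyx => qyx ryx; apply: (@index_bin_inj (f x)).
- by rewrite inE xT eqxx.
- by rewrite inE yT fyx eqxx.
- by rewrite /= (divn_eq (index x _) K) (divn_eq (index y _) K) qyx ryx.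
Qed.

End Chunks.

Lemma card_chunked_msg_lt (A M : finType) (T : {set A}) (f : A -> M) :
  (0 < #|M|)%N -> (#|M| <= #|T|)%N ->
  (#|{: chunked_msg T f (#|T| %/ #|M|)}| < 3 * #|M|)%N.
Proof.
move=> M_gt0 M_le_T; have := card_chunked_msg T f (#|T| %/ #|M|).
by have := divn_divn_lt M_gt0 M_le_T; lia.
Qed.

Lemma Pwak_refine (R : realType) (X Y : finType) (n : nat) (M0 M0' M2 : finType)
    (phi0 : n.-tuple X -> M0) (phi0' : n.-tuple X -> M0') (g : M0' -> M0)
    (phi2 : n.-tuple Y -> M2) (psi : M0 -> M2 -> n.-tuple Y)
    (Q : n.-tuple X * n.-tuple Y -> R) :
  (forall x, g (phi0' x) = phi0 x) ->
  Pwak phi0' phi2 (fun m => psi (g m)) Q = Pwak phi0 phi2 psi Q.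
Proof. by move=> gphi; apply: eq_bigl => xy; rewrite gphi. Qed.

Theorem lemma1 (R : realType) (X Y : finType) (n : nat)
  (hn : (1 <= n)%N) (hX : (1 < #|X|)%N)
  (M0 M2 : finType)
  (phi0 : n.-tuple X -> M0) (phi2 : n.-tuple Y -> M2)
  (psi : M0 -> M2 -> n.-tuple Y)
  (P : {ffun X * Y -> nat}) (hP : is_jointType n P)
  (hM0 : log2 (#|typeClassX n P|%:R : R) >= log2 (#|M0|%:R : R)) :
  exists (M0' M2' : finType)
         (phi0' : n.-tuple X -> M0') (phi2' : n.-tuple Y -> M2')
         (psi' : M0' -> M2' -> n.-tuple Y),
    [/\ log2 (#|M0'|%:R : R)
          <= log2 (#|M0|%:R : R) + log2 (n%:R : R)
             + log2 (log2 (#|X|%:R : R)) + 2,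
        log2 (#|M2'|%:R : R) = log2 (#|M2|%:R : R),
        Pwak phi0' phi2' psi' (unifT (R:=R) P)
          <= Pwak phi0 phi2 psi (unifT (R:=R) P)
      & forall m : M0',
          log2 (#|[set x in typeClassX n P | phi0' x == m]|%:R : R)
            <= log2 ((#|typeClassX n P|%:R : R) / (#|M0|%:R : R))].
Proof.
set T := typeClassX n P.
have log2X_ge1 : 1 <= log2 (#|X|%:R : R).
  by rewrite -[X in X <= _](log2_2 R) log2_le ?ler_nat ?ler1n // ltnW.
have slack (r : R) : r <= log2 (#|M0|%:R : R) + 2 ->
    r <= log2 (#|M0|%:R : R) + log2 (n%:R : R) + log2 (log2 (#|X|%:R : R)) + 2.
  move/le_trans; apply; rewrite lerD2r -addrA lerDl.
  by rewrite addr_ge0 ?log2_ge0 // ler1n.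
have [T0|T_gt0] := posnP #|T|.
  exists M0, M2, phi0, phi2, psi; split => // [|m]; first by apply: slack; rewrite lerDl.
  have /eqP -> : #|bin T phi0 m| == 0%N by rewrite -leqn0 -T0 subset_leq_card ?bin_sub.
  by rewrite T0 mul0r.
have [x _] := card_gt0P T_gt0.
have M0_gt0 : (0 < #|M0|)%N by apply/card_gt0P; exists (phi0 x).
have M0_le_T : (#|M0| <= #|T|)%N by rewrite -(ler_nat R) -ler_log2 ?posrE ?ltr0n.
have K_gt0 : (0 < #|T| %/ #|M0|)%N by rewrite divn_gt0.
exists (chunked_msg T phi0 (#|T| %/ #|M0|)), M2, (chunked T phi0 (#|T| %/ #|M0|)),
  phi2, (fun p => psi (tag p)).
split => [||| p].
- apply/slack/log2_le_exp2M => //.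
  have := card_chunked_msg_lt phi0 M0_gt0 M0_le_T.
  by move/ltnW/leq_trans; apply; rewrite leq_mul2r orbT.
- by [].
- by rewrite (Pwak_refine (phi0 := phi0) (g := tag)).
- exact/log2_le_divn/card_chunk_le.
Qed.
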